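(* Let $t$ be a planar binary tree with $n\ge1$ internal vertices, with leaves $l_1,\dots,l_{n+1}$ numbered from left to right, and let $\varphi$ be a level function on $t$. Let $\sigma=\sigma_{t,\varphi}\in S_n$ be the associated permutation. Then the map $j\mapsto l_{j+1}$ restricts to a bijection from the descent set $D(\sigma)=\{i\in\{1,\dots,n-1\}:\sigma(i)>\sigma(i+1)\}$ onto the set of descents of $t$.
   Context: A planar binary tree is a finite planar rooted tree in which every internal vertex has exactly two incoming edges (left and right) and one outgoing edge; leaves are the external incoming edges. Internal vertices are partially ordered by $u<v$ iff $u$ lies on the path from the root to $v$. A level function is a bijection $\varphi$ from the set of internal vertices onto $\{1,\dots,n\}$ which is decreasing for this order (if $u<v$ then $\varphi(u)>\varphi(v)$; so the root has level $n$). For $i=1,\dots,n$, let $u_i$ be the internal vertex lying between $l_i$ and $l_{i+1}$, i.e. the unique internal vertex such that $l_i$ lies in its left subtree and $l_{i+1}$ in its right subtree; then $\sigma_{t,\varphi}(i):=\varphi(u_i)$. A leaf of $t$ is a descent if it is not the leftmost leaf and it is the left incoming edge of its internal vertex. *)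

From mathcomp Require Import all_boot.
Set Implicit Arguments. Unset Strict Implicit. Unset Printing Implicit Defensive.

(* Planar binary trees.  A vertex is addressed by its path from the root:
   a sequence of booleans, false = go to the left incoming edge,
   true = go to the right incoming edge. *)
Inductive tree : Type := Leaf | Node of tree & tree.

Fixpoint nodes (t : tree) : seq (seq bool) :=
  match t with
  | Leaf => [::]
  | Node l r => [::] :: (map (cons false) (nodes l) ++ map (cons true) (nodes r))
  end.

Fixpoint leaves (t : tree) : seq (seq bool) :=
  match t with
  | Leaf => [:: [::]]
  | Node l r => map (cons false) (leaves l) ++ map (cons true) (leaves r)
  end.

Definition internal (t : tree) (u : seq bool) : bool := u \in nodes t.

Definition nint (t : tree) : nat := size (nodes t).

(* the leaf l_i, 1-indexed *)
Definition leaf_at (t : tree) (i : nat) : seq bool := nth [::] (leaves t) i.-1.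

(* u < v : u lies (strictly) on the path from the root to v *)
Definition vlt (u v : seq bool) : bool := prefix u v && (u != v).

Definition level_function (t : tree) (phi : seq bool -> nat) : Prop :=
  [/\ (forall u, internal t u -> 1 <= phi u <= nint t),
      {in internal t &, injective phi},
      (forall k, 1 <= k <= nint t -> exists2 u, internal t u & phi u = k)
    & (forall u v, internal t u -> internal t v -> vlt u v -> phi v < phi u)].

(* u_i : the unique internal vertex with l_i in its left subtree and
   l_{i+1} in its right subtree *)
Definition u_at (t : tree) (i : nat) : seq bool :=
  nth [::] [seq u <- nodes t | prefix (rcons u false) (leaf_at t i)
                               && prefix (rcons u true) (leaf_at t i.+1)] 0.

Definition sigma_tphi (t : tree) (phi : seq bool -> nat) (i : nat) : nat :=
  phi (u_at t i).

Definition perm_descent (n : nat) (sigma : nat -> nat) (i : nat) : bool :=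
  (1 <= i <= n.-1) && (sigma i.+1 < sigma i).

(* a leaf of t is a descent if it is not the leftmost leaf and it is the
   left incoming edge of its internal vertex *)
Definition tree_descent (t : tree) (p : seq bool) : bool :=
  [&& p \in leaves t, p != leaf_at t 1 & last true p == false].

(* Consecutive leaves l_k and l_(k+1) branch off at the internal vertex u_k:
   l_k = u_k ++ false :: true^x and l_(k+1) = u_k ++ true :: false^y.
   Reading l_(j+1) both ways, either it ends with false, and then u_j lies below
   u_(j+1), so sigma(j+1) < sigma(j); or it ends with true, and then u_(j+1) lies
   below u_j, so sigma(j) < sigma(j+1).  Hence j is a descent of sigma exactly
   when l_(j+1) is a left incoming edge, and j |-> l_(j+1) is injective since the
   leaves are pairwise distinct. *)

From mathcomp Require Import all_boot zify.

Set Implicit Arguments.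
Unset Strict Implicit.
Unset Printing Implicit Defensive.

Lemma size_leaves t : size (leaves t) = (nint t).+1.
Proof.
rewrite /nint; elim: t => //= l IHl r IHr.
by rewrite !size_cat !size_map IHl IHr addnS addSn.
Qed.

Lemma nint_Node l r : nint (Node l r) = (nint l + nint r).+1.
Proof. by rewrite /nint /= size_cat !size_map. Qed.

Lemma uniq_leaves t : uniq (leaves t).
Proof.
elim: t => //= l IHl r IHr.
rewrite cat_uniq !map_inj_uniq ?IHl ?IHr ?andbT //=; try by move=> ? ? [].
by apply/hasPn => _ /mapP[q _ ->]; apply/mapP => -[].
Qed.

Lemma nth_leaves_Node_l l r k : k <= nint l ->
  nth [::] (leaves (Node l r)) k = false :: nth [::] (leaves l) k.
Proof.
move=> kl; rewrite /= nth_cat size_map size_leaves ltnS kl.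
by rewrite (nth_map [::]) // size_leaves.
Qed.

Lemma nth_leaves_Node_r l r k : k <= nint r ->
  nth [::] (leaves (Node l r)) ((nint l).+1 + k) = true :: nth [::] (leaves r) k.
Proof.
move=> kr; rewrite /= nth_cat size_map size_leaves ltnNge leq_addr addKn /=.
by rewrite (nth_map [::]) // size_leaves.
Qed.

Lemma first_leaf_nseq t : exists m, nth [::] (leaves t) 0 = nseq m false.
Proof.
elim: t => [|l [m Hm] r _]; first by exists 0.
by exists m.+1; rewrite nth_leaves_Node_l // Hm.
Qed.

Lemma last_leaf_nseq t : exists m, nth [::] (leaves t) (nint t) = nseq m true.
Proof.
elim: t => [|l _ r [m Hm]]; first by exists 0.
by exists m.+1; rewrite nint_Node -addSn nth_leaves_Node_r // Hm.
Qed.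

Lemma consecutive_leaves t k : k < nint t -> exists u x y,
  [/\ u \in nodes t, nth [::] (leaves t) k = u ++ false :: nseq x true
    & nth [::] (leaves t) k.+1 = u ++ true :: nseq y false].
Proof.
elim: t k => [//|l IHl r IHr] k; rewrite nint_Node ltnS => kn.
have [kl | lk | ->] := ltngtP k (nint l).
- have [u [x [y [Hu Hk Hk1]]]] := IHl k kl.
  exists (false :: u), x, y; split.
  + by rewrite /= in_cons mem_cat map_f.
  + by rewrite nth_leaves_Node_l ?Hk // ltnW.
  + by rewrite nth_leaves_Node_l ?Hk1.
- have -> : k = (nint l).+1 + (k - (nint l).+1) by lia.
  have kr : k - (nint l).+1 < nint r by lia.
  have [u [x [y [Hu Hk Hk1]]]] := IHr _ kr.
  exists (true :: u), x, y; split.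
  + by rewrite /= in_cons mem_cat (map_f (cons true)) ?orbT.
  + by rewrite nth_leaves_Node_r ?Hk // ltnW.
  + by rewrite -addnS nth_leaves_Node_r ?Hk1.
- have [x Hx] := last_leaf_nseq l; have [y Hy] := first_leaf_nseq r.
  exists [::], x, y; split => //.
  + by rewrite nth_leaves_Node_l // Hx.
  + by rewrite -[(nint l).+1]addn0 nth_leaves_Node_r // Hy.
Qed.

Lemma branch_point_inj (u v s1 s2 s3 s4 : seq bool) :
  u ++ false :: s1 = v ++ false :: s2 -> u ++ true :: s3 = v ++ true :: s4 -> u = v.
Proof.
elim: u v => [|b u IH] [|c v] //=; first by case=> <-.
- by case=> ->.
- by case=> -> E1 [E2]; rewrite (IH v E1 E2).
Qed.

Lemma u_at_branch t k u x y : u \in nodes t ->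
  nth [::] (leaves t) k = u ++ false :: nseq x true ->
  nth [::] (leaves t) k.+1 = u ++ true :: nseq y false ->
  u_at t k.+1 = u.
Proof.
rewrite /u_at /leaf_at /= => Hu -> ->; set s := filter _ _.
have us : u \in s by rewrite mem_filter Hu -!cat_rcons !prefix_prefix.
have : nth [::] s 0 \in s by rewrite mem_nth // lt0n size_eq0; apply: contraTneq us => ->.
rewrite mem_filter => /andP[/andP[/prefixP[s1 E1] /prefixP[s2 E2]] _].
by apply: (@branch_point_inj _ _ s1 _ s2); rewrite -cat_rcons -?E1 -?E2.
Qed.

Lemma vlt_cat_cons (u s : seq bool) b : vlt u (u ++ b :: s).
Proof.
rewrite /vlt prefix_prefix; apply/eqP => /(congr1 size).
by rewrite size_cat /=; lia.
Qed.

Lemma nseqS_rcons T n (a : T) : nseq n.+1 a = rcons (nseq n a) a.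
Proof. by elim: n => //= n ->. Qed.

Lemma branch_order (u v : seq bool) x y :
  u ++ true :: nseq y false = v ++ false :: nseq x true ->
  if x is 0 then vlt u v else vlt v u.
Proof.
case: x y => [|x] [|y] E; have := congr1 (last true) E.
- by rewrite !last_cat.
- rewrite nseqS_rcons -rcons_cons -rcons_cat cats1 in E.
  by move: E => /rcons_inj[<-] _; rewrite vlt_cat_cons.
- rewrite nseqS_rcons -rcons_cons -rcons_cat cats1 in E.
  by move: E => /rcons_inj[->] _; rewrite vlt_cat_cons.
- by rewrite !nseqS_rcons -!rcons_cons -!rcons_cat !last_rcons.
Qed.

Lemma sigma_descentE t phi j : level_function t phi -> 0 < j < nint t ->
  (sigma_tphi t phi j.+1 < sigma_tphi t phi j) = (last true (leaf_at t j.+1) == false).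
Proof.
case=> _ _ _ phi_decr /andP[j0 jn].
have [u [xu [yu [Hu left_u right_u]]]] := consecutive_leaves (leq_ltn_trans (leq_pred j) jn).
have [v [xv [yv [Hv left_v right_v]]]] := consecutive_leaves jn.
have -> : sigma_tphi t phi j = phi u.
  by rewrite /sigma_tphi -(prednK j0) (u_at_branch Hu left_u right_u).
have -> : sigma_tphi t phi j.+1 = phi v by rewrite /sigma_tphi (u_at_branch Hv left_v right_v).
rewrite prednK // in right_u; rewrite /leaf_at /= left_v.
have := branch_order (etrans (esym right_u) left_v); case: xv {left_v right_v} => [|xv] Huv.
- by rewrite cats1 last_rcons eqxx phi_decr.
- rewrite nseqS_rcons -rcons_cons -rcons_cat last_rcons /=.
  by rewrite ltnNge ltnW // phi_decr.
Qed.

Lemma perm_descent_sigmaE t phi j : level_function t phi ->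
  perm_descent (nint t) (sigma_tphi t phi) j =
  [&& 0 < j, j < nint t & last true (leaf_at t j.+1) == false].
Proof.
move=> Hphi; rewrite /perm_descent; case: (posnP j) => //= j0.
have [jn | nj] := ltnP j (nint t).
- by rewrite sigma_descentE ?j0 // (_ : j <= _) //; lia.
- by rewrite (_ : j <= _ = false) //; lia.
Qed.

Lemma leaf_at_inj t j k : j <= nint t -> k <= nint t ->
  leaf_at t j.+1 = leaf_at t k.+1 -> j = k.
Proof.
rewrite /leaf_at /= => jn kn /eqP.
by rewrite nth_uniq ?uniq_leaves ?size_leaves ?ltnS // => /eqP.
Qed.

Lemma tree_descent_leaf_at t j : 0 < j <= nint t ->
  tree_descent t (leaf_at t j.+1) = (last true (leaf_at t j.+1) == false).
Proof.
case/andP=> j0 jn; rewrite /tree_descent mem_nth ?size_leaves //=.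
by apply/andb_idl => _; apply: contraTneq j0 => /(leaf_at_inj jn (leq0n _)) ->.
Qed.

Lemma leaf_at_index t p : p \in leaves t -> leaf_at t (index p (leaves t)).+1 = p.
Proof. exact: nth_index. Qed.

Lemma tree_descent_index t p : tree_descent t p -> 0 < index p (leaves t) < nint t.
Proof.
case/and3P=> Hp p1 /eqP pl; have := Hp; rewrite -index_mem size_leaves ltnS => iN.
rewrite lt0n ltn_neqAle iN andbT; apply/andP; split.
- by apply: contraNneq p1 => i0; rewrite -(leaf_at_index Hp) i0.
- apply/eqP => iE; have [m Hm] := last_leaf_nseq t.
  move: pl; rewrite -(leaf_at_index Hp) /leaf_at /= iE Hm.
  by case: m {Hm} => [|m] //; rewrite nseqS_rcons last_rcons.
Qed.

Theorem lemma5p2 (t : tree) (phi : seq bool -> nat) :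
  1 <= nint t -> level_function t phi ->
  let sigma := sigma_tphi t phi in
  [/\ (forall j, perm_descent (nint t) sigma j -> tree_descent t (leaf_at t j.+1)),
      (forall j k, perm_descent (nint t) sigma j -> perm_descent (nint t) sigma k ->
                   leaf_at t j.+1 = leaf_at t k.+1 -> j = k)
    & (forall p, tree_descent t p ->
                 exists2 j, perm_descent (nint t) sigma j & leaf_at t j.+1 = p)].
Proof.
move=> _ Hphi sigma; split.
- move=> j; rewrite perm_descent_sigmaE // => /and3P[j0 jn pl].
  by rewrite tree_descent_leaf_at // j0 (ltnW jn).
- move=> j k; rewrite !perm_descent_sigmaE // => /and3P[_ jn _] /and3P[_ kn _].
  exact: leaf_at_inj (ltnW jn) (ltnW kn).
- move=> p Dp; have Hp : p \in leaves t by case/and3P: Dp.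
  exists (index p (leaves t)); last exact: leaf_at_index.
  have /andP[i0 iN] := tree_descent_index Dp.
  by rewrite perm_descent_sigmaE // i0 iN leaf_at_index //; case/and3P: Dp.
Qed.
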